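(* Let $\Gamma\subset\mathbb{O}$ be countable. Then there exists a countable totally ordered subset $\hat\Gamma\subset\mathbb{O}$ with $\sup(\hat\Gamma)=\sup(\Gamma)$ in $\overline{\mathbb{O}}$. Moreover, if $\Gamma\subset\mathbb{B}$ (respectively $\Gamma\subset\mathbb{L}$), then $\hat\Gamma$ can be taken with $\hat\Gamma\subset\mathbb{B}$ (respectively $\hat\Gamma\subset\mathbb{L}$).
   Context: Let $\mathcal{O}$ be the set of non-decreasing sequences $a:\mathbb{N}\to[0,\infty)$, $a\approx b$ iff $c_1a(n)\le b(n)\le c_2a(n)$ for all $n$ for some constants $0<c_1\le c_2$, $\mathbb{O}=\mathcal{O}/\!\approx$ with classes $[a(n)]$, ordered by $[a(n)]\le[b(n)]$ iff $a(n)\le Cb(n)$ for all $n$ for some $C>0$; $\overline{\mathbb{O}}$ is its Dedekind–MacNeille completion. $\mathbb{B}$ is the set of classes with $a(n+1)\le Ca(n)$ for all $n$ for some $C>0$; $\mathbb{L}$ is the set of classes with $[a(mn)]=[a(n)]$ for some integer $m\ge2$. *)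

From Stdlib Require Import Reals.
Open Scope R_scope.

Definition isO (a : nat -> R) : Prop :=
  (forall n, 0 <= a n) /\ (forall n, a n <= a (S n)).

Definition leO (a b : nat -> R) : Prop :=
  exists C, 0 < C /\ forall n, a n <= C * b n.

Definition eqvO (a b : nat -> R) : Prop :=
  exists c1 c2, 0 < c1 /\ c1 <= c2 /\ forall n, c1 * a n <= b n /\ b n <= c2 * a n.

(* A subset of 𝕆 is given by a set of representatives S (its classes are {[a] | a ∈ S}). *)
Definition seqset := (nat -> R) -> Prop.

Definition countable_set (S : seqset) : Prop :=
  exists f : nat -> option (nat -> R), forall a, S a -> exists n, f n = Some a.

Definition totally_ordered (S : seqset) : Prop :=
  forall a b, S a -> S b -> leO a b \/ leO b a.

Definition upper_bound (S : seqset) (b : nat -> R) : Prop :=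
  isO b /\ forall a, S a -> leO a b.

(* sup S in the Dedekind–MacNeille completion of 𝕆, represented (as usual)
   by the cut S^{ul}: the set of lower bounds (in 𝕆) of the upper bounds of S. *)
Definition DMsup (S : seqset) (a : nat -> R) : Prop :=
  isO a /\ forall b, upper_bound S b -> leO a b.

Definition inB (a : nat -> R) : Prop :=
  exists C, 0 < C /\ forall n, a (S n) <= C * a n.

Definition inL (a : nat -> R) : Prop :=
  exists m : nat, (2 <= m)%nat /\ eqvO (fun n => a (m * n)%nat) a.

Definition good_hat (G Gh : seqset) : Prop :=
  countable_set Gh /\ (forall a, Gh a -> isO a) /\ totally_ordered Gh /\
  (forall a, DMsup Gh a <-> DMsup G a).

From Stdlib Require Import Reals Lra Lia ClassicalEpsilon.
Open Scope R_scope.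

(* Enumerate G as g 0, g 1, ... (padding the gaps of the
   enumeration with the zero sequence) and take the running pointwise maxima
   h k = max (g 0, ..., g k).  The h k increase pointwise in k, so their
   classes form a countable chain; every g i lies below h i, and every upper
   bound of all the g i bounds each finite maximum h k.  Hence G and the chain
   have the same upper bounds in 𝕆, and therefore the same supremum in the
   Dedekind–MacNeille completion.  For the refinements, both 𝔹 and 𝕃 are
   (on 𝕆) instances of the condition "a (s n) <= C a n" for a shift s
   (s n = n+1, resp. s n = 2n), and every such condition holds for the zero
   sequence and is stable under pointwise maxima of members of 𝕆. *)

Lemma isO_monotone (a : nat -> R) : isO a -> forall n m, (n <= m)%nat -> a n <= a m.
Proof.
  intros [_ Hstep] n m Hnm. induction Hnm as [|m _ IH]; [lra|].
  specialize (Hstep m). lra.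
Qed.

Lemma leO_pointwise (a b : nat -> R) : (forall n, a n <= b n) -> leO a b.
Proof. intro H. exists 1. split; [lra|]. intro n. specialize (H n). lra. Qed.

Lemma DMsup_of_same_upper_bounds (S T : seqset) :
  (forall b, upper_bound S b <-> upper_bound T b) ->
  forall a, DMsup S a <-> DMsup T a.
Proof.
  intros Hub a. split; intros [Ha Hlow]; split; auto; intros b Hb; apply Hlow, Hub; exact Hb.
Qed.

(* "a (s n) is at most a constant times a n": for s = S this is membership in
   𝔹, and for s n = 2n it characterises 𝕃 on 𝕆 (see below). *)
Definition shift_bounded (s : nat -> nat) (a : nat -> R) : Prop :=
  exists C, 0 < C /\ forall n, a (s n) <= C * a n.

Lemma inB_shift_bounded (a : nat -> R) : inB a <-> shift_bounded S a.
Proof. reflexivity. Qed.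

(* On 𝕆, [a(mn)] = [a(n)] for some m >= 2 iff a(2n) <= C a(n): monotonicity
   lets one pass between the factors 2 and m (taking m = 2 for the converse). *)
Lemma inL_iff_doubling (a : nat -> R) :
  isO a -> inL a <-> shift_bounded (fun n => 2 * n)%nat a.
Proof.
  intro Ha. split.
  - intros [m [Hm [c1 [c2 [Hc1 [_ Heqv]]]]]].
    exists (/ c1). split; [apply Rinv_0_lt_compat; lra|]. intro n.
    destruct (Heqv n) as [Hlow _].
    assert (H2m : a (2 * n)%nat <= a (m * n)%nat) by (apply isO_monotone; auto; nia).
    assert (Hpos : 0 <= a (2 * n)%nat) by apply Ha.
    apply Rmult_le_reg_l with c1; auto.
    rewrite <- Rmult_assoc, Rinv_r by lra. nra.
  - intros [C [HC Hdbl]]. exists 2%nat. split; [lia|].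
    assert (HiC : 0 < / C) by (apply Rinv_0_lt_compat; lra).
    exists (/ C), (Rmax 1 (/ C)).
    split; [exact HiC|]. split; [apply Rmax_r|]. intro n. split.
    + apply Rmult_le_reg_l with C; auto.
      rewrite <- Rmult_assoc, Rinv_r by lra. specialize (Hdbl n). lra.
    + assert (Hn2n : a n <= a (2 * n)%nat) by (apply isO_monotone; auto; lia).
      assert (Hpos : 0 <= a (2 * n)%nat) by apply Ha.
      assert (H1 : 1 <= Rmax 1 (/ C)) by apply Rmax_l. nra.
Qed.

Definition zero_seq : nat -> R := fun _ => 0.

Lemma zero_seq_isO : isO zero_seq.
Proof. split; intro; unfold zero_seq; lra. Qed.

Lemma zero_seq_shift_bounded (s : nat -> nat) : shift_bounded s zero_seq.
Proof. exists 1. split; [lra|]. intro. unfold zero_seq. lra. Qed.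

Definition pmax (a b : nat -> R) : nat -> R := fun n => Rmax (a n) (b n).

Lemma pmax_isO (a b : nat -> R) : isO a -> isO b -> isO (pmax a b).
Proof.
  intros [Ha0 Ha] [Hb0 Hb]. split; intro n; unfold pmax.
  - specialize (Ha0 n). eapply Rle_trans; [eauto|apply Rmax_l].
  - apply Rmax_lub.
    + eapply Rle_trans; [apply Ha|apply Rmax_l].
    + eapply Rle_trans; [apply Hb|apply Rmax_r].
Qed.

Lemma pmax_shift_bounded (s : nat -> nat) (a b : nat -> R) :
  isO a -> isO b -> shift_bounded s a -> shift_bounded s b -> shift_bounded s (pmax a b).
Proof.
  intros [Ha0 _] [Hb0 _] [Ca [HCa Ha]] [Cb [HCb Hb]].
  exists (Ca + Cb). split; [lra|]. intro n. unfold pmax.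
  specialize (Ha n); specialize (Hb n); specialize (Ha0 n); specialize (Hb0 n).
  pose proof (Rmax_l (a n) (b n)); pose proof (Rmax_r (a n) (b n)).
  apply Rmax_lub; nra.
Qed.

Lemma pmax_leO (a b c : nat -> R) : isO c -> leO a c -> leO b c -> leO (pmax a b) c.
Proof.
  intros [Hc0 _] [Ca [HCa Ha]] [Cb [HCb Hb]].
  exists (Ca + Cb). split; [lra|]. intro n. unfold pmax.
  specialize (Ha n); specialize (Hb n); specialize (Hc0 n).
  apply Rmax_lub; nra.
Qed.

Section RunningMax.

Variable g : nat -> nat -> R.

Fixpoint running_max (k : nat) : nat -> R :=
  match k with
  | O => g O
  | S k => pmax (running_max k) (g (S k))
  end.

Definition running_max_set : seqset := fun a => exists k, a = running_max k.

Lemma running_max_increasing (k k' : nat) :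
  (k <= k')%nat -> forall n, running_max k n <= running_max k' n.
Proof.
  induction 1 as [|k' _ IH]; intro n; [lra|].
  simpl. unfold pmax. eapply Rle_trans; [apply IH|apply Rmax_l].
Qed.

Lemma running_max_ge (i : nat) : forall n, g i n <= running_max i n.
Proof. intro n. destruct i; simpl; [lra|apply Rmax_r]. Qed.

Lemma running_max_ind (P : (nat -> R) -> Prop) :
  (forall i, isO (g i)) -> (forall i, P (g i)) ->
  (forall a b, isO a -> isO b -> P a -> P b -> P (pmax a b)) ->
  forall k, isO (running_max k) /\ P (running_max k).
Proof.
  intros HgO HgP Hmax. induction k as [|k [IHO IHP]]; simpl; [auto|].
  split; [apply pmax_isO|apply Hmax]; auto.
Qed.

Lemma running_max_isO : (forall i, isO (g i)) -> forall k, isO (running_max k).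
Proof.
  intros HgO k. apply (running_max_ind (fun _ => True)); auto.
Qed.

Lemma running_max_countable : countable_set running_max_set.
Proof. exists (fun k => Some (running_max k)). intros a [k ->]. exists k. reflexivity. Qed.

Lemma running_max_totally_ordered : totally_ordered running_max_set.
Proof.
  intros a b [k ->] [k' ->]. destruct (Nat.le_ge_cases k k') as [Hle|Hge].
  - left. apply leO_pointwise, running_max_increasing, Hle.
  - right. apply leO_pointwise, running_max_increasing, Hge.
Qed.

End RunningMax.

Definition padded_enumeration (G : seqset) (g : nat -> nat -> R) : Prop :=
  (forall i, G (g i) \/ g i = zero_seq) /\ (forall a, G a -> exists i, g i = a).

Lemma padded_enumeration_exists (G : seqset) :
  countable_set G -> exists g, padded_enumeration G g.
Proof.
  intros [f Hf].
  exists (fun i => match f i with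
           | Some a => if excluded_middle_informative (G a) then a else zero_seq
           | None => zero_seq
           end).
  split.
  - intro i. destruct (f i) as [a|]; [|auto].
    destruct (excluded_middle_informative (G a)); auto.
  - intros a Ga. destruct (Hf a Ga) as [i Hi]. exists i. rewrite Hi.
    destruct (excluded_middle_informative (G a)); tauto.
Qed.

Lemma padded_enumeration_all (G : seqset) (g : nat -> nat -> R) (P : (nat -> R) -> Prop) :
  padded_enumeration G g -> P zero_seq -> (forall a, G a -> P a) -> forall i, P (g i).
Proof. intros [Hg _] H0 HG i. destruct (Hg i) as [Gi | ->]; auto. Qed.

(* The running maxima of a padded enumeration have the same upper bounds
   as G: each member of G is below some running maximum, and each running
   maximum is a finite maximum of members of G and zero. *)
Lemma running_max_same_upper_bounds (G : seqset) (g : nat -> nat -> R) :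
  padded_enumeration G g -> (forall a, G a -> isO a) ->
  forall b, upper_bound (running_max_set g) b <-> upper_bound G b.
Proof.
  intros Henum HO b. split; intros [Hb Hbound]; split; auto.
  - intros a Ga. destruct (proj2 Henum a Ga) as [i <-].
    destruct (Hbound (running_max g i) (ex_intro _ i eq_refl)) as [C [HC Hle]].
    exists C. split; auto. intro n. eapply Rle_trans; [apply running_max_ge|apply Hle].
  - intros a [k ->].
    apply (running_max_ind g (fun a => leO a b)).
    + intro i. apply (padded_enumeration_all G g isO); auto. apply zero_seq_isO.
    + intro i. apply (padded_enumeration_all G g (fun a => leO a b)); auto.
      apply leO_pointwise. intro n. apply Hb.
    + intros a1 a2 _ _. apply pmax_leO, Hb.
Qed.

Lemma running_max_good_hat (G : seqset) (g : nat -> nat -> R) :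
  padded_enumeration G g -> (forall a, G a -> isO a) ->
  good_hat G (running_max_set g).
Proof.
  intros Henum HO.
  assert (HgO : forall i, isO (g i)).
  { apply (padded_enumeration_all G g isO); auto. apply zero_seq_isO. }
  split; [apply running_max_countable|]. split.
  { intros a [k ->]. apply running_max_isO, HgO. }
  split; [apply running_max_totally_ordered|].
  apply DMsup_of_same_upper_bounds, running_max_same_upper_bounds; auto.
Qed.

Lemma running_max_shift_bounded (G : seqset) (g : nat -> nat -> R) (s : nat -> nat) :
  padded_enumeration G g -> (forall a, G a -> isO a) ->
  (forall a, G a -> shift_bounded s a) ->
  forall a, running_max_set g a -> isO a /\ shift_bounded s a.
Proof.
  intros Henum HO Hs a [k ->]. apply running_max_ind.
  - apply (padded_enumeration_all G g isO); auto. apply zero_seq_isO.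
  - apply (padded_enumeration_all G g (shift_bounded s)); auto.
    apply zero_seq_shift_bounded.
  - apply pmax_shift_bounded.
Qed.

Theorem lemma3p1 (G : seqset) (hc : countable_set G) (hO : forall a, G a -> isO a) :
  (exists Gh : seqset, good_hat G Gh) /\
  ((forall a, G a -> inB a) -> exists Gh : seqset, good_hat G Gh /\ (forall a, Gh a -> inB a)) /\
  ((forall a, G a -> inL a) -> exists Gh : seqset, good_hat G Gh /\ (forall a, Gh a -> inL a)).
Proof.
  destruct (padded_enumeration_exists G hc) as [g Henum].
  pose proof (running_max_good_hat G g Henum hO) as Hgood.
  split; [|split].
  - exists (running_max_set g). exact Hgood.
  - intro HB. exists (running_max_set g). split; [exact Hgood|].
    intros a Ha. apply inB_shift_bounded.
    apply (running_max_shift_bounded G g S); auto.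
  - intro HL. exists (running_max_set g). split; [exact Hgood|].
    intros a Ha.
    assert (HaO : isO a /\ shift_bounded (fun n => 2 * n)%nat a).
    { apply (running_max_shift_bounded G g); auto.
      intros b Gb. apply inL_iff_doubling; auto. }
    apply inL_iff_doubling; apply HaO.
Qed.
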